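(* Let $G$ be a finite transitive permutation group on a finite set $\Omega$ such that ${\bf O}_2(G)=1$ and such that the point stabiliser $G_\omega$ (for $\omega\in\Omega$) is a $2$-group. Then $\mathrm{mindeg}_\Omega(G)\ge 2|\Omega|/3$.
   Context: ${\bf O}_2(G)$ denotes the largest normal $2$-subgroup of $G$. For $g\in G$, $\mathrm{Fix}_\Omega(g)=\{\omega\in\Omega\mid \omega^g=\omega\}$ and $\mathrm{supp}_\Omega(g)=\Omega\setminus\mathrm{Fix}_\Omega(g)$. The minimal degree is $\mathrm{mindeg}_\Omega(G)=\min_{g\in G\setminus\{1\}}|\mathrm{supp}_\Omega(g)|$. *)

From mathcomp Require Import all_boot all_fingroup all_solvable.
Set Implicit Arguments. Unset Strict Implicit. Unset Printing Implicit Defensive.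

Definition Fix_perm (T : finType) (g : {perm T}) : {set T} := [set w | g w == w].
Definition supp_perm (T : finType) (g : {perm T}) : {set T} := ~: Fix_perm g.

From mathcomp Require Import all_boot all_fingroup all_solvable.
From mathcomp Require Import zify.
Set Implicit Arguments. Unset Strict Implicit. Unset Printing Implicit Defensive.
Open Scope group_scope.

(* Point stabilisers are 2-groups, so a nontrivial g with a fixed point is a
   2-element, and some power t of g is an involution with Fix g \subset Fix t.
   As O_2(G) = 1, the Baer-Suzuki theorem gives a conjugate s of t such that
   <t, s> is not a 2-group; two involutions generate a dihedral group, so
   u = t s is not a 2-element, and its nontrivial 2'-part r is inverted by t.
   Then t, t ^ r = t r^2 and t ^ r^2 = t r^4 have pairwise disjoint fixed-point
   sets of equal size: a common fixed point of two of them is fixed by r^2 or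
   r^4, nontrivial elements of odd order, whereas only 2-elements fix points.
   Hence 3 |Fix g| <= 3 |Fix t| <= |Omega|. *)

Section GroupElements.
Variable gT : finGroupType.
Implicit Types t s u r x : gT.

Lemma involutionV t : t ^+ 2 = 1 -> t^-1 = t.
Proof. by move=> t2; apply/eqP; rewrite eq_invg_mul -expg2 t2. Qed.

Lemma involution_2elt t : t ^+ 2 = 1 -> 2.-elt t.
Proof. by move=> t2; apply: (@pnat_dvd _ 2); rewrite ?order_dvdn ?t2. Qed.

Lemma conjg_mul_involutions t s :
  t ^+ 2 = 1 -> s ^+ 2 = 1 -> (t * s) ^ t = (t * s)^-1.
Proof.
move=> t2 s2; rewrite conjgE invMg (involutionV t2) (involutionV s2).
by rewrite !mulgA -expg2 t2 mul1g.
Qed.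

Lemma involutions_gen_pgroup t s :
  t ^+ 2 = 1 -> s ^+ 2 = 1 -> 2.-elt (t * s) -> 2.-group <<[set t; s]>>.
Proof.
move=> t2 s2 ts_2.
have t_norm : <[t]> \subset 'N(<[t * s]>).
  by rewrite cycle_subG; apply/normP; rewrite -cycleJ conjg_mul_involutions ?cycleV.
set D := (<[t * s]> <*> <[t]>)%G.
have Dt : t \in D by rewrite -cycle_subG joing_subr.
have Dts : t * s \in D by rewrite -cycle_subG joing_subl.
apply: (@pgroupS _ _ D).
  have -> : s = t * (t * s) by rewrite mulgA -expg2 t2 mul1g.
  by rewrite gen_subG subUset !sub1set Dt groupM.
rewrite /D /= norm_joinEr // pgroupM.
by apply/andP; split; last exact: involution_2elt.
Qed.

Lemma conjg_expg_inverting t r j : r ^ t = r^-1 -> t ^ (r ^+ j) = t * r ^+ (j + j).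
Proof.
move=> rt; rewrite conjgE mulgA (conjgC (r ^- j)) conjVg conjXg rt expVgn invgK.
by rewrite expgD !mulgA.
Qed.

Lemma constt_inverted pi t u : u ^ t = u^-1 -> u.`_pi ^ t = (u.`_pi)^-1.
Proof. by move=> ut; rewrite -consttJ ut consttV. Qed.

Lemma p'_elt_expg_eq1 pi x n : pi^'.-elt x -> pi.-nat n -> x ^+ n = 1 -> x = 1.
Proof.
move=> x_pi' n_pi xn1; apply/eqP; rewrite -order_eq1; apply/eqP.
by apply: pnat_1 x_pi'; apply: pnat_dvd n_pi; rewrite order_dvdn xn1.
Qed.

Lemma p_elt_cycle_order (p : nat) x :
  p.-elt x -> x != 1 -> exists2 t, t \in <[x]> & #[t] = p.
Proof.
move=> x_p nx1; have ntx : <[x]> != 1 by rewrite cycle_eq1.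
have [p_pr p_dv _] := pgroup_pdiv x_p ntx.
by have [t] := Cauchy p_pr p_dv; exists t.
Qed.

End GroupElements.

Section FixedPoints.
Variable T : finType.
Implicit Types a b x : {perm T}.

Lemma Fix_permX a n : Fix_perm a \subset Fix_perm (a ^+ n).
Proof. by apply/subsetP=> w; rewrite !inE permX => /eqP aw; rewrite iter_fix. Qed.

Lemma Fix_permJ a x : Fix_perm (a ^ x) = x^-1 @^-1: Fix_perm a.
Proof.
apply/setP=> w; rewrite !inE conjgE !permM.
by rewrite -(inj_eq (@perm_inj _ x^-1)) permK.
Qed.

Lemma card_Fix_permJ a x : #|Fix_perm (a ^ x)| = #|Fix_perm a|.
Proof. by rewrite Fix_permJ card_preimset //; apply: perm_inj. Qed.

Lemma Fix_permI_subset a b : Fix_perm a :&: Fix_perm b \subset Fix_perm (a^-1 * b).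
Proof.
apply/subsetP=> w; rewrite !inE permM => /andP[/eqP aw /eqP bw].
by rewrite -{1}aw permK bw.
Qed.

Lemma leq_card_disjoint3 (A B C : {set T}) :
  [disjoint A & B] -> [disjoint A & C] -> [disjoint B & C] ->
  #|A| + #|B| + #|C| <= #|T|.
Proof.
move=> dAB dAC dBC; rewrite -cardsUI (disjoint_setI0 dAB) cards0 addn0.
rewrite -cardsUI setIUl (disjoint_setI0 dAC) (disjoint_setI0 dBC) setU0 cards0.
by rewrite addn0 max_card.
Qed.

End FixedPoints.

Section PiStabilisers.
Variables (T : finType) (pi : nat_pred) (G : {group {perm T}}).
Hypothesis stab_pi : forall w : T, pi.-group 'C_G[w | 'P].

Lemma Fix_perm_pi_elt x w : x \in G -> w \in Fix_perm x -> pi.-elt x.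
Proof.
move=> Gx; rewrite inE => /eqP xw; apply: (mem_p_elt (stab_pi w)).
by rewrite inE Gx; apply/astab1P.
Qed.

Lemma Fix_perm_pi'_elt x : x \in G -> pi^'.-elt x -> x != 1 -> Fix_perm x = set0.
Proof.
move=> Gx x_pi' nx1; apply/setP=> w; rewrite in_set0; apply/negP=> xw.
move: nx1; rewrite -order_eq1 (pnat_1 (Fix_perm_pi_elt Gx xw) x_pi') //.
Qed.

Lemma disjoint_Fix_perm a b :
  a \in G -> b \in G -> pi^'.-elt (a^-1 * b) -> a^-1 * b != 1 ->
  [disjoint Fix_perm a & Fix_perm b].
Proof.
move=> Ga Gb ab_pi' nab1; rewrite -setI_eq0 -subset0.
by rewrite -(Fix_perm_pi'_elt _ ab_pi' nab1) ?Fix_permI_subset // groupM ?groupV.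
Qed.

End PiStabilisers.

Lemma card_Fix_perm_inverting (T : finType) (G : {group {perm T}}) t r :
    (forall w : T, 2.-group 'C_G[w | 'P]) ->
    t \in G -> r \in G -> 2^'.-elt r -> r != 1 -> r ^ t = r^-1 ->
  3 * #|Fix_perm t| <= #|T|.
Proof.
move=> stab2 Gt Gr r_2' nr1 rt.
have card_t j : #|Fix_perm (t * r ^+ (j + j))| = #|Fix_perm t|.
  by rewrite -conjg_expg_inverting // card_Fix_permJ.
have rX_neq1 n : 2.-nat n -> r ^+ n != 1.
  move=> n_2; apply: contra nr1 => /eqP rn1.
  by apply/eqP/(p'_elt_expg_eq1 r_2' n_2).
have dis a n : 2.-nat n ->
    [disjoint Fix_perm (t * r ^+ a) & Fix_perm (t * r ^+ (a + n))].
  move=> n_2; have quot : (t * r ^+ a)^-1 * (t * r ^+ (a + n)) = r ^+ n.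
    by rewrite invMg expgD -!mulgA !mulKg.
  by apply: (disjoint_Fix_perm stab2); rewrite ?quot ?p_eltX ?rX_neq1 ?groupM ?groupX.
have := leq_card_disjoint3 (dis 0%N 2%N isT) (dis 0%N 4%N isT) (dis 2%N 2%N isT).
by rewrite (card_t 0%N) (card_t 1%N) (card_t 2%N) !mulSn mul0n addn0 addnA.
Qed.

Lemma exists_conj_not_pgroup (gT : finGroupType) (p : nat) (G : {group gT}) t :
    t \in G -> 'O_p(G) = 1 -> t != 1 ->
  exists2 y, y \in G & ~~ p.-group <<[set t; t ^ y]>>.
Proof.
move=> Gt Op1 nt1.
have [/forall_inP all_p | /forall_inPn[y Gy not_p]] :=
  boolP [forall (y | y \in G), p.-group <<[set t; t ^ y]>>]; last by exists y.
by move: (Baer_Suzuki Gt all_p); rewrite Op1 inE (negPf nt1).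
Qed.

Theorem theorem1p1 (T : finType) (G : {group {perm T}}) :
  [transitive G, on [set: T] | 'P] ->
  ('O_2(G))%g = 1%g ->
  (forall w : T, (2.-group 'C_G[w | 'P])%g) ->
  forall g : {perm T}, g \in G -> g != 1%g ->
    2 * #|[set: T]| <= 3 * #|supp_perm g|.
Proof.
move=> _ O2 stab2 g Gg ng1.
suff : 3 * #|Fix_perm g| <= #|T|.
  by have := cardsC (Fix_perm g); rewrite cardsT /supp_perm; lia.
have [-> | [w gw]] := set_0Vmem (Fix_perm g); first by rewrite cards0.
have [t /cycleP[i def_t] ot] := p_elt_cycle_order (Fix_perm_pi_elt stab2 Gg gw) ng1.
have Gt : t \in G by rewrite def_t groupX.
have t2 : t ^+ 2 = 1 by rewrite -ot expg_order.
have nt1 : t != 1 by rewrite -order_eq1 ot.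
have [y Gy not_2] := exists_conj_not_pgroup Gt O2 nt1.
have s2 : (t ^ y) ^+ 2 = 1 by rewrite -conjXg t2 conj1g.
set u := t * t ^ y.
have u_not2 : ~~ 2.-elt u by apply: contra not_2; apply: involutions_gen_pgroup.
set r := u.`_(2^').
have Gr : r \in G.
  by apply: (subsetP _ _ (cycle_constt _ u)); rewrite cycle_subG groupM ?groupJ.
have nr1 : r != 1 by apply: contra u_not2 => /eqP/constt1P; rewrite p_eltNK.
have rt : r ^ t = r^-1 by apply/constt_inverted/conjg_mul_involutions.
apply: leq_trans (card_Fix_perm_inverting stab2 Gt Gr (p_elt_constt _ u) nr1 rt).
by rewrite leq_mul2l subset_leq_card ?orbT // def_t Fix_permX.
Qed.
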